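(* For every $x\in\mathbb T^3\setminus\mathfrak I$, the Lebesgue measure of $\mathcal S(x)$ is strictly positive.
   Context: $\mathbb{T}^3=\mathbb{R}^3/\mathbb{Z}^3$; $\omega(k)=\omega_0+\sum_{j=1}^3 2(1-\cos(2\pi k^j))$ with fixed $2<\omega_0<3$. Two wave vectors $x,y\in\mathbb{T}^3$ are connected by one collision if $\omega(y)=\omega(x)+\omega(y-x)$, or $\omega(x)=\omega(y)+\omega(x-y)$, or $\omega(x+y)=\omega(x)+\omega(y)$. The no-collision region $\mathfrak I$ is the set of $x\in\mathbb T^3$ such that no $y\in\mathbb T^3$ is connected to $x$ by one collision. For $x\in\mathbb T^3\setminus\mathfrak I$: $\mathcal S^1(x)$ is the set of $y$ connected to $x$ by one collision, $\mathcal S^n(x)=\bigcup_{z\in\mathcal S^{n-1}(x)}\mathcal S^1(z)$ for $n\ge2$, and $\mathcal S(x)=\bigcup_{n\ge1}\mathcal S^n(x)$. *)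

From HB Require Import structures.
From mathcomp Require Import all_boot all_order all_algebra.
From mathcomp Require Import all_classical all_reals all_analysis.
Set Implicit Arguments. Unset Strict Implicit. Unset Printing Implicit Defensive.
Import Order.TTheory GRing.Theory Num.Theory.
Import numFieldNormedType.Exports.
Local Open Scope classical_set_scope.
Local Open Scope ring_scope.

(* The torus T^3 = R^3/Z^3 is represented by R^3 = (R * R) * R; all the
   notions below are Z^3-periodic, so they descend to the torus, and the
   Lebesgue measure of a subset of T^3 is the Lebesgue measure of its
   periodic lift restricted to the fundamental domain [0,1)^3. *)
Section Defs.
Variable R : realType.
Definition pt := ((R * R) * R)%type.

Definition padd (x y : pt) : pt :=
  ((x.1.1 + y.1.1, x.1.2 + y.1.2), x.2 + y.2).
Definition psub (x y : pt) : pt :=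
  ((x.1.1 - y.1.1, x.1.2 - y.1.2), x.2 - y.2).

Definition omega (w0 : R) (k : pt) : R :=
  w0 + (2 * (1 - cos (2 * pi * k.1.1))
        + 2 * (1 - cos (2 * pi * k.1.2))
        + 2 * (1 - cos (2 * pi * k.2))).

Definition connected1 (w0 : R) (x y : pt) : Prop :=
  omega w0 y = omega w0 x + omega w0 (psub y x)
  \/ omega w0 x = omega w0 y + omega w0 (psub x y)
  \/ omega w0 (padd x y) = omega w0 x + omega w0 y.

Definition no_collision (w0 : R) : set pt :=
  [set x | forall y : pt, ~ connected1 w0 x y].

Definition S1 (w0 : R) (x : pt) : set pt := [set y | connected1 w0 x y].

(* Sn w0 n x = S^{n+1}(x) *)
Fixpoint Sn (w0 : R) (n : nat) (x : pt) : set pt :=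
  match n with
  | O => S1 w0 x
  | n'.+1 => \bigcup_(z in Sn w0 n' x) S1 w0 z
  end.

Definition Sall (w0 : R) (x : pt) : set pt := \bigcup_n Sn w0 n x.

Definition cube : set pt :=
  [set k | (0 <= k.1.1 < 1) /\ (0 <= k.1.2 < 1) /\ (0 <= k.2 < 1)].

Definition leb3 : set pt -> \bar R :=
  ((lebesgue_measure \x lebesgue_measure) \x lebesgue_measure)%E.
End Defs.

From Pilot Require Import Defs.
From HB Require Import structures.
From mathcomp Require Import all_boot all_order all_algebra.
From mathcomp Require Import all_classical all_reals all_analysis.
From mathcomp Require Import ring lra.
Import Order.TTheory GRing.Theory Num.Theory.
Import numFieldNormedType.Exports.
Set Implicit Arguments. Unset Strict Implicit. Unset Printing Implicit Defensive.
Local Open Scope classical_set_scope.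
Local Open Scope ring_scope.

(* Write omega = w0 + omega1 k.1.1 + omega1 k.1.2 + omega1 k.2.  The relation
   omega (a + b) = omega a + omega b reads [defect a b = w0], where [defect] sums
   over the coordinates [defect1 s t = omega1 (s + t) - omega1 s - omega1 t
   = 4 sin (pi s) (sin (pi (s + 2 t)) - sin (pi s))], which is at most 1.  Each of
   the three kinds of collision of x with some y yields such a pair (a, b) with
   a, b in {x} u S^1(x).  As 2 < w0 < 3, the three summands are positive and not
   all equal to 1, and this prevents b from being a critical point of [defect a]
   while a is a critical point of [defect b].  Near a regular point y of
   [defect v], the level set [defect v = w0] is a graph over one coordinate, and
   moving along it makes [defect _ z - w0] change sign for all z in a small open
   box; by the intermediate value theorem every such z is two collisions away
   from v.  So S(x) contains an open box; being Z^3-periodic, it meets the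
   fundamental cube in a set of positive measure. *)

Section OneDimensional.
Variable R : realType.
Implicit Types a b c e q t u w : R.

(* Of the three points [c] and [c +- e/2], at most one satisfies [P] and at most
   one satisfies [Q]. *)
Lemma exists_near_avoid2 (P Q : R -> Prop) c e : 0 < e < 1 ->
  (forall a b, P a -> P b -> 0 < `|a - b| < 1 -> False) ->
  (forall a b, Q a -> Q b -> 0 < `|a - b| < 1 -> False) ->
  exists m, [/\ `|m - c| < e, ~ P m & ~ Q m].
Proof.
move=> /andP[e0 e1] sepP sepQ; set c1 := c + e / 2; set c2 := c - e / 2.
have dist t : 0 < t < 1 -> 0 < `|t| < 1 by move=> /andP[t0 t1]; rewrite gtr0_norm ?t0.
have d10 : 0 < `|c1 - c| < 1 by apply: dist; rewrite /c1; apply/andP; split; lra.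
have d02 : 0 < `|c - c2| < 1 by apply: dist; rewrite /c2; apply/andP; split; lra.
have d12 : 0 < `|c1 - c2| < 1 by apply: dist; rewrite /c1 /c2; apply/andP; split; lra.
have near t : -e < t - c < e -> `|t - c| < e by rewrite ltr_norml.
have n0 : `|c - c| < e by apply: near; apply/andP; split; lra.
have n1 : `|c1 - c| < e by apply: near; rewrite /c1; apply/andP; split; lra.
have n2 : `|c2 - c| < e by apply: near; rewrite /c2; apply/andP; split; lra.
have [[nP1 nQ1]|/not_andP[/contrapT P1|/contrapT Q1]] := pselect (~ P c1 /\ ~ Q c1).
- by exists c1.
- have [Qc|nQc] := pselect (Q c); last by exists c; split => // Pc; exact: sepP _ _ P1 Pc d10.
  by exists c2; split => // [P2|Q2]; [exact: sepP _ _ P1 P2 d12 | exact: sepQ _ _ Qc Q2 d02].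
- have [Pc|nPc] := pselect (P c); last by exists c; split => // Qc; exact: sepQ _ _ Q1 Qc d10.
  by exists c2; split => // [P2|Q2]; [exact: sepP _ _ Pc P2 d02 | exact: sepQ _ _ Q1 Q2 d12].
Qed.

Lemma mulr_lt0_min_max a b : a * b < 0 -> Num.min a b <= 0 <= Num.max a b.
Proof.
move=> ab; have [a0|a0] := leP a 0.
- have b0 : 0 < b by rewrite ltNge; apply: contraTN ab => b0; rewrite -leNgt mulr_le0.
  by rewrite ge_min a0 le_max (ltW b0) orbT.
- have b0 : b < 0 by rewrite ltNge; apply: contraTN ab => b0; rewrite -leNgt mulr_ge0 // ltW.
  by rewrite ge_min (ltW b0) orbT le_max (ltW a0).
Qed.

Lemma cos_eq0_sin2 u : cos u = 0 -> sin u ^+ 2 = 1.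
Proof. by move=> cu; rewrite sin2cos2 cu expr0n subr0. Qed.

Lemma sqr_sinB u w : sin u ^+ 2 - sin w ^+ 2 = sin (u - w) * sin (u + w).
Proof.
rewrite sinB sinD.
transitivity (sin u ^+ 2 * (cos w ^+ 2 + sin w ^+ 2) - (cos u ^+ 2 + sin u ^+ 2) * sin w ^+ 2).
  by rewrite !cos2Dsin2; ring.
ring.
Qed.

Lemma sinD_sinB u w : sin (u + w) - sin (u - w) = 2 * cos u * sin w.
Proof. by rewrite sinD sinB; ring. Qed.

Lemma cos_triple u : cos (u + (u + u)) = cos u * (1 - 4 * sin u ^+ 2).
Proof.
transitivity (cos u * ((cos u ^+ 2 + sin u ^+ 2) - 4 * sin u ^+ 2)).
  by rewrite !cosD !sinD; ring.
by rewrite cos2Dsin2.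
Qed.

Lemma sin_triple u : sin (u + (u + u)) = sin u * (3 - 4 * sin u ^+ 2).
Proof.
transitivity (sin u * (3 * (cos u ^+ 2 + sin u ^+ 2) - 4 * sin u ^+ 2)).
  by rewrite !sinD cosD; ring.
by rewrite cos2Dsin2 mulr1.
Qed.

Lemma sinD_double0 u t : sin t = 0 -> sin (u + (t + t)) = sin u.
Proof.
move=> st; have ct : cos t ^+ 2 = 1 by rewrite cos2sin2 st expr2 mulr0 subr0.
rewrite sinD [sin (t + t)]sinD [cos (t + t)]cosD st.
by transitivity (sin u * cos t ^+ 2); [ring | rewrite ct mulr1].
Qed.

Lemma cosD_double0 u t : sin t = 0 -> cos (u + (t + t)) = cos u.
Proof.
move=> st; have ct : cos t ^+ 2 = 1 by rewrite cos2sin2 st expr2 mulr0 subr0.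
rewrite cosD [sin (t + t)]sinD [cos (t + t)]cosD st.
by transitivity (cos u * cos t ^+ 2); [ring | rewrite ct mulr1].
Qed.

Lemma sin_pi_neq0 t : 0 < `|t| < 1 -> sin (pi * t) != 0.
Proof.
have pos s : 0 < s < 1 -> 0 < sin (pi * s).
  move=> /andP[s0 s1]; apply: sin_gt0_pi; rewrite mulr_gt0 ?pi_gt0 //=.
  by rewrite -[ltRHS]mulr1 ltr_pM2l ?pi_gt0.
move=> ht; have [tge|tlt] := leP 0 t.
- by rewrite ger0_norm // in ht; rewrite gt_eqF ?pos.
- rewrite ltr0_norm // in ht.
  by rewrite -[t]opprK mulrN sinN oppr_eq0 gt_eqF ?pos.
Qed.

Lemma sin_pi_sep a b : sin (pi * a) = 0 -> sin (pi * b) = 0 -> 0 < `|a - b| < 1 -> False.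
Proof. by move=> sa sb /sin_pi_neq0; rewrite mulrBr sinB sa sb mul0r mulr0 subrr eqxx. Qed.

Lemma cos_pi_sep w a b : cos (pi * (a + 2 * w)) = 0 -> cos (pi * (b + 2 * w)) = 0 ->
  0 < `|a - b| < 1 -> False.
Proof.
move=> ca cb /sin_pi_neq0.
rewrite (_ : pi * (a - b) = pi * (a + 2 * w) - pi * (b + 2 * w)); last by ring.
by rewrite sinB ca cb mulr0 mul0r subrr eqxx.
Qed.

Lemma continuous_sin_pi c q : continuous (fun t : R => sin (pi * (c + q * t))).
Proof.
move=> t; apply: (continuous_comp (f := fun t => pi * (c + q * t))); last exact: continuous_sin.
apply: continuousM; first exact: cst_continuous.
apply: continuousD; first exact: cst_continuous.
by apply: continuousM; [exact: cst_continuous | exact: cvg_id].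
Qed.

Lemma exists_small_sin_pi q e : 0 < q -> 0 < e ->
  exists2 r, 0 < r <= e & sin (pi * r) ^+ 2 < q.
Proof.
move=> q0 e0; pose f t := sin (pi * (0 + 1 * t)) * sin (pi * (0 + 1 * t)).
have f0 : f 0 = 0 by rewrite /f mulr0 addr0 mulr0 sin0 mulr0.
have fc : f @ (0 : R) --> (0 : R).
  by rewrite -[X in _ --> X]f0; apply: continuousM; exact: continuous_sin_pi.
have : \forall t \near (0 : R), f t < q by exact: cvgr_lt 0 fc q q0.
move=> /nbhs_ballP[rho /= rho0 Hrho].
exists (Num.min (rho / 2) e).
  by rewrite lt_min ge_min lexx orbT andbT divr_gt0.
have := Hrho (Num.min (rho / 2) e); rewrite /f add0r mul1r -expr2; apply.
rewrite /ball /= sub0r normrN gtr0_norm; last by rewrite lt_min divr_gt0.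
by rewrite gt_min; apply/orP; left; rewrite ltr_pdivrMr // ltr_pMr // ltr1n.
Qed.

Definition omega1 t : R := 2 * (1 - cos (2 * pi * t)).
Definition defect1 a b : R := omega1 (a + b) - omega1 a - omega1 b.
Definition defect1_shift t w u : R := defect1 t (w + u) - defect1 t w.

Lemma omega1_sin t : omega1 t = 4 * sin (pi * t) ^+ 2.
Proof.
rewrite /omega1 (_ : 2 * pi * t = pi * t + pi * t); last by ring.
by rewrite cosD -!expr2 cos2sin2; ring.
Qed.

Lemma omega1_natD t (n : nat) : omega1 (t + n%:R) = omega1 t.
Proof.
have := periodicn (@cosD2pi R) n (2 * pi * t).
rewrite -[(pi *+ 2) *+ n]mulr_natr -[pi *+ 2]mulr_natr => h.
by rewrite /omega1 -h; congr (2 * (1 - cos _)); ring.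
Qed.

Lemma omega1_intD t (k : int) : omega1 (t + k%:~R) = omega1 t.
Proof.
case: k => n; first exact: omega1_natD.
by rewrite NegzE intrN -[in RHS](subrK (n.+1)%:R t) omega1_natD.
Qed.

Lemma defect1C a b : defect1 a b = defect1 b a.
Proof. by rewrite /defect1 (addrC a b); ring. Qed.

Lemma defect1_sin a b :
  defect1 a b = 4 * sin (pi * a) * (sin (pi * (a + 2 * b)) - sin (pi * a)).
Proof.
rewrite /defect1 !omega1_sin.
transitivity (4 * ((sin (pi * (a + b)) ^+ 2 - sin (pi * b) ^+ 2) - sin (pi * a) ^+ 2)).
  by ring.
rewrite sqr_sinB (_ : pi * (a + b) - pi * b = pi * a); last by ring.
by rewrite (_ : pi * (a + b) + pi * b = pi * (a + 2 * b)); [ring | ring].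
Qed.

Lemma defect1_le1 a b : defect1 a b <= 1.
Proof.
rewrite defect1_sin; set s := sin (pi * a); set u := sin (pi * (a + 2 * b)).
have := sin_geN1 (pi * (a + 2 * b)); have := sin_le1 (pi * (a + 2 * b)).
rewrite -/u => u1 u1'.
have := sqr_ge0 (2 * s - u); have := sqr_ge0 u; nra.
Qed.

(* With A = pi a and B = pi b, the two cosines vanish only if B - A is a multiple
   of pi, so that A + 2 B = 3 A modulo 2 pi; then [defect1 a b = 8 s^2 (1 - 2 s^2)]
   with s = sin A and cos (3 A) = 0, so s^2 = 1/4 or s^2 = 1, giving 1 or -8. *)
Lemma defect1_critical a b : cos (pi * (a + 2 * b)) = 0 -> cos (pi * (b + 2 * a)) = 0 ->
  0 < defect1 a b -> defect1 a b = 1.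
Proof.
set A := pi * a; set B := pi * b.
have -> : pi * (a + 2 * b) = A + (B + B) by rewrite /A /B; ring.
have -> : pi * (b + 2 * a) = B + (A + A) by rewrite /A /B; ring.
move=> cP cQ.
have sBA : sin (B - A) = 0.
  by rewrite (_ : B - A = A + (B + B) - (B + (A + A))) ?sinB ?cP ?cQ; [ring | ring].
have eP : A + (B + B) = (A + (A + A)) + ((B - A) + (B - A)) by ring.
have sP : sin (A + (B + B)) = sin (A + (A + A)) by rewrite eP (sinD_double0 _ sBA).
have cP3 : cos (A + (A + A)) = 0 by rewrite -cP eP (cosD_double0 _ sBA).
rewrite defect1_sin -/A (_ : pi * (a + 2 * b) = A + (B + B)); last by rewrite /A /B; ring.
rewrite sP sin_triple.
have -> : 4 * sin A * (sin A * (3 - 4 * sin A ^+ 2) - sin A)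
        = 8 * sin A ^+ 2 * (1 - 2 * sin A ^+ 2) by ring.
move: cP3; rewrite cos_triple => /eqP; rewrite mulf_eq0 => /orP[/eqP cA|].
- by rewrite (cos_eq0_sin2 cA); lra.
- rewrite subr_eq0 => /eqP s2; have -> : sin A ^+ 2 = 1 / 4 by lra.
  lra.
Qed.

Lemma defect1_shiftE t w u :
  defect1_shift t w u = 8 * sin (pi * u) * cos (pi * (t + 2 * w + u)) * sin (pi * t).
Proof.
rewrite /defect1_shift /defect1 !omega1_sin.
transitivity (4 * ((sin (pi * (t + (w + u))) ^+ 2 - sin (pi * (w + u)) ^+ 2)
                 - (sin (pi * (t + w)) ^+ 2 - sin (pi * w) ^+ 2))); first by ring.
rewrite !sqr_sinB.
rewrite (_ : pi * (t + (w + u)) - pi * (w + u) = pi * t); last by ring.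
rewrite (_ : pi * (t + w) - pi * w = pi * t); last by ring.
rewrite (_ : pi * (t + (w + u)) + pi * (w + u) = pi * (t + 2 * w + u) + pi * u); last by ring.
rewrite (_ : pi * (t + w) + pi * w = pi * (t + 2 * w + u) - pi * u); last by ring.
transitivity (4 * sin (pi * t) * (sin (pi * (t + 2 * w + u) + pi * u)
                                   - sin (pi * (t + 2 * w + u) - pi * u))); first by ring.
by rewrite sinD_sinB; ring.
Qed.

(* The shift [1/2 - m - 2 w] puts a simple zero of [defect1_shift _ w _] at [m]. *)
Lemma defect1_shift_sign m r w : cos (pi * (m + 2 * w)) != 0 -> 0 < r < 1 ->
  sin (pi * r) ^+ 2 < sin (pi * m) ^+ 2 ->
  defect1_shift (m - r) w (1 / 2 - m - 2 * w) * defect1_shift (m + r) w (1 / 2 - m - 2 * w) < 0.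
Proof.
move=> cm r01 rm; set d := 1 / 2 - m - 2 * w; set K := cos (pi * (m + 2 * w)).
have shiftE phi : defect1_shift phi w d = - 8 * K * sin (pi * (phi - m)) * sin (pi * phi).
  rewrite defect1_shiftE (_ : pi * d = - (pi * (m + 2 * w) - pi / 2)); last by rewrite /d; ring.
  rewrite (_ : pi * (phi + 2 * w + d) = pi * (phi - m) + pi / 2); last by rewrite /d; ring.
  by rewrite sinN sinBpihalf cosDpihalf /K; ring.
rewrite !shiftE (_ : pi * (m - r - m) = - (pi * r)); last by ring.
rewrite (_ : pi * (m + r - m) = pi * r); last by ring.
rewrite (_ : pi * (m - r) = pi * m - pi * r); last by ring.
rewrite (_ : pi * (m + r) = pi * m + pi * r); last by ring.
rewrite [X in X < 0](_ : _ = - (64 * K ^+ 2 * sin (pi * r) ^+ 2 *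
  (sin (pi * m - pi * r) * sin (pi * m + pi * r)))); last by rewrite sinN; ring.
rewrite -sqr_sinB oppr_lt0; apply: mulr_gt0; last by rewrite subr_gt0.
have r1 : 0 < `|r| < 1 by case/andP: r01 => r0 r1; rewrite gtr0_norm // r0.
by apply: mulr_gt0; [apply: mulr_gt0 |]; rewrite ?exprn_even_gt0 ?cm ?sin_pi_neq0 ?orbT.
Qed.

Lemma continuous_omega1 : continuous omega1.
Proof.
move=> t; apply: (continuous_comp (f := fun t : R => cos (2 * pi * t)) (g := fun u => 2 * (1 - u))).
  apply: (continuous_comp (f := fun t : R => 2 * pi * t)); last exact: continuous_cos.
  by apply: continuousM; [exact: cst_continuous | exact: cvg_id].
apply: continuousM; first exact: cst_continuous.
by apply: continuousB; [exact: cst_continuous | exact: cvg_id].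
Qed.

Lemma continuous_defect1r {T : topologicalType} (f : T -> R) a x :
  {for x, continuous f} -> {for x, continuous (fun s => defect1 a (f s))}.
Proof.
move=> fc; rewrite /defect1; apply: continuousB.
  apply: continuousB; last exact: cst_continuous.
  apply: (continuous_comp (f := fun s => a + f s)); last exact: continuous_omega1.
  by apply: continuousD; [exact: cst_continuous | exact: fc].
by apply: (continuous_comp fc); exact: continuous_omega1.
Qed.

Lemma continuous_defect1l {T : topologicalType} (f : T -> R) b x :
  {for x, continuous f} -> {for x, continuous (fun s => defect1 (f s) b)}.
Proof.
move=> fc; rewrite /defect1; apply: continuousB; last exact: cst_continuous.
apply: continuousB; last by apply: (continuous_comp fc); exact: continuous_omega1.
apply: (continuous_comp (f := fun s => f s + b)); last exact: continuous_omega1.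
by apply: continuousD; [exact: fc | exact: cst_continuous].
Qed.

End OneDimensional.

Section Defect.
Variable R : realType.
Implicit Types (a b p v w x y z : pt R).

Definition defect a b : R :=
  defect1 a.1.1 b.1.1 + defect1 a.1.2 b.1.2 + defect1 a.2 b.2.

(* The gradient of [defect a] at [b] has coordinates
   [8 pi sin (pi a_j) cos (pi (a_j + 2 b_j))]. *)
Definition defect_regular a b : bool :=
  [|| cos (pi * (a.1.1 + 2 * b.1.1)) != 0, cos (pi * (a.1.2 + 2 * b.1.2)) != 0
    | cos (pi * (a.2 + 2 * b.2)) != 0].

Definition reach2 (w0 : R) v : set (pt R) :=
  [set z | exists y, defect v y = w0 /\ defect y z = w0].

Definition box (z0 : pt R) (d : R) : set (pt R) :=
  [set z | [/\ `|z.1.1 - z0.1.1| < d, `|z.1.2 - z0.1.2| < d & `|z.2 - z0.2| < d]].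

Definition swap13 p : pt R := ((p.2, p.1.2), p.1.1).
Definition swap23 p : pt R := ((p.1.1, p.2), p.1.2).

Lemma defectC a b : defect a b = defect b a.
Proof. by rewrite /defect (defect1C a.1.1) (defect1C a.1.2) (defect1C a.2). Qed.

Lemma defect_swap13 a b : defect (swap13 a) (swap13 b) = defect a b.
Proof. by rewrite /defect /=; lra. Qed.

Lemma defect_swap23 a b : defect (swap23 a) (swap23 b) = defect a b.
Proof. by rewrite /defect /=; lra. Qed.

Lemma swap13K : involutive swap13. Proof. by case=> [[? ?] ?]. Qed.
Lemma swap23K : involutive swap23. Proof. by case=> [[? ?] ?]. Qed.

Lemma defect_shift_snd p w d :
  defect p ((w.1.1, w.1.2 + d), w.2) - defect w p = defect1_shift p.1.2 w.1.2 d.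
Proof.
rewrite /defect /defect1_shift /= (defect1C w.1.1) (defect1C w.1.2) (defect1C w.2).
ring.
Qed.

Lemma defect_intD y z (n1 n2 n3 : int) :
  defect y ((z.1.1 + n1%:~R, z.1.2 + n2%:~R), z.2 + n3%:~R) = defect y z.
Proof. by rewrite /defect /defect1 /= !addrA !omega1_intD. Qed.

Lemma continuous_defect p z : {for z, continuous (fun z => defect p z)}.
Proof.
rewrite /defect; apply: continuousD; first apply: continuousD.
- by apply: continuous_defect1r; apply: (continuous_comp (f := fst)); exact: cvg_fst.
- by apply: continuous_defect1r; apply: (continuous_comp (f := fst)); [exact: cvg_fst | exact: cvg_snd].
- by apply: continuous_defect1r; exact: cvg_snd.
Qed.

Lemma nbhs_box (z0 : pt R) (P : set (pt R)) :
  (\forall z \near z0, P z) -> exists2 d, 0 < d & box z0 d `<=` P.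
Proof.
move=> /nbhs_ballP[d d0 H]; exists d => // z [h1 h2 h3]; apply: H.
by split; [split|]; rewrite /ball /= distrC.
Qed.

Lemma omega_padd (w0 : R) a b :
  omega w0 (padd a b) = omega w0 a + omega w0 b <-> defect a b = w0.
Proof. by rewrite /omega /defect /defect1 /omega1 /=; split=> h; lra. Qed.

Lemma connected1_defect (w0 : R) x y : Defs.connected1 w0 x y ->
  exists a b, [/\ defect a b = w0, (a = x \/ S1 w0 x a) & (b = x \/ S1 w0 x b)].
Proof.
have paddB a b : padd a (psub b a) = b.
  by case: a b => [[? ?] ?] [[? ?] ?]; rewrite /padd /psub /=; congr (_, _, _); ring.
have psubB a b : psub a (psub a b) = b.
  by case: a b => [[? ?] ?] [[? ?] ?]; rewrite /psub /=; congr (_, _, _); ring.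
case=> [h|[h|h]].
- exists x, (psub y x); split; first by apply/omega_padd; rewrite paddB.
    by left.
  by right; right; right; rewrite paddB.
- exists y, (psub x y); split; first by apply/omega_padd; rewrite paddB.
    by right; right; left.
  by right; right; left; rewrite psubB [RHS]addrC.
- by exists x, y; split; [apply/omega_padd | left | right; right; right].
Qed.

Lemma Sall_reach2 (w0 : R) x v : v = x \/ S1 w0 x v -> reach2 w0 v `<=` Sall w0 x.
Proof.
have S1_defect a b : defect a b = w0 -> S1 w0 a b.
  by move=> h; right; right; apply/omega_padd.
move=> [->|xv] z [y [/S1_defect vy /S1_defect yz]].
- by exists 1%N => //; exists y.
- by exists 2%N => //; exists y => //; exists v.
Qed.

Lemma defect1_gt0 (w0 : R) a b : 2 < w0 -> defect a b = w0 ->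
  [/\ 0 < defect1 a.1.1 b.1.1, 0 < defect1 a.1.2 b.1.2 & 0 < defect1 a.2 b.2].
Proof.
rewrite /defect => w2 h.
have := defect1_le1 a.1.1 b.1.1; have := defect1_le1 a.1.2 b.1.2.
have := defect1_le1 a.2 b.2.
by split; lra.
Qed.

Lemma defect_regular_pair (w0 : R) a b : 2 < w0 < 3 -> defect a b = w0 ->
  defect_regular a b || defect_regular b a.
Proof.
move=> /andP[w2 w3] hab; have [g1 g2 g3] := defect1_gt0 w2 hab.
apply/negPn/negP; rewrite /defect_regular !negb_or !negbK.
move=> /andP[/and3P[/eqP c1 /eqP c2 /eqP c3] /and3P[/eqP d1 /eqP d2 /eqP d3]].
move: hab; rewrite /defect (defect1_critical c1 d1 g1) (defect1_critical c2 d2 g2).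
by rewrite (defect1_critical c3 d3 g3); lra.
Qed.

End Defect.

Section LevelSet.
Variable R : realType.
Variables (w0 : R) (v y : pt R).
Hypotheses (vy : defect v y = w0) (sv : sin (pi * v.2) != 0)
  (cvy : cos (pi * (v.2 + 2 * y.2)) != 0).

(* Near [y], the level set [defect v _ = w0] is parametrised by its second
   coordinate: [y'.1.1 = y.1.1], [y'.1.2 = phi], and [y'.2] is solved from
   [sin (pi * (v.2 + 2 * y'.2)) = level_sin phi]. *)
Definition level_sin (phi : R) : R :=
  sin (pi * (v.2 + 2 * y.2)) - sin (pi * v.1.2) / sin (pi * v.2) *
    (sin (pi * (v.1.2 + 2 * phi)) - sin (pi * (v.1.2 + 2 * y.1.2))).

Definition level_pt (phi : R) : pt R :=
  ((y.1.1, phi), (asin (level_sin phi) / pi - v.2) / 2).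

Lemma defect_level_pt phi : -1 <= level_sin phi <= 1 -> defect v (level_pt phi) = w0.
Proof.
move=> hU; rewrite -vy /defect /= !(defect1_sin v.1.2) !(defect1_sin v.2).
have solve (p u : R) : p != 0 -> p * (v.2 + 2 * ((u / p - v.2) / 2)) = u.
  by move=> ?; field.
by rewrite solve ?gt_eqF ?pi_gt0 // asinK ?in_itv // /level_sin; field.
Qed.

Lemma continuous_level_sin phi : {for phi, continuous level_sin}.
Proof.
rewrite /level_sin; apply: continuousB; first exact: cst_continuous.
apply: continuousM; first exact: cst_continuous.
by apply: continuousB; [exact: continuous_sin_pi | exact: cst_continuous].
Qed.

Lemma continuous_defect_level_pt z phi : -1 < level_sin phi < 1 ->
  {for phi, continuous (fun t => defect (level_pt t) z - w0)}.
Proof.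
move=> hU; apply: continuousB; last exact: cst_continuous.
rewrite /defect /=; apply: continuousD; first apply: continuousD.
- exact: cst_continuous.
- by apply: continuous_defect1l; exact: cvg_id.
apply: continuous_defect1l.
apply: (continuous_comp (f := level_sin) (g := fun u => (asin u / pi - v.2) / 2)).
  exact: continuous_level_sin.
apply: (continuous_comp (f := @asin R) (g := fun u => (u / pi - v.2) / 2)).
  exact: continuous_asin.
apply: continuousM; last exact: cst_continuous.
apply: continuousB; last exact: cst_continuous.
by apply: continuousM; [exact: cvg_id | exact: cst_continuous].
Qed.

Lemma level_sin_near :
  exists2 e, 0 < e & forall phi, `|phi - y.1.2| < e -> -1 < level_sin phi < 1.
Proof.
have Uy : level_sin y.1.2 = sin (pi * (v.2 + 2 * y.2)).
  by rewrite /level_sin subrr mulr0 subr0.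
have : `|level_sin y.1.2| < 1 by rewrite Uy lt_neqAle sin_max andbT norm_sin_eq1.
rewrite ltr_norml => /andP[U1 U2].
have Uc : {for y.1.2, continuous level_sin} by exact: continuous_level_sin.
have : \forall phi \near y.1.2, -1 < level_sin phi < 1.
  near=> phi; apply/andP; split; near: phi; [exact: cvgr_gt U1 | exact: cvgr_lt U2].
move=> /nbhs_ballP[e e0 He]; exists e => // phi hphi; apply: He.
by rewrite /ball /= distrC.
Unshelve. all: by end_near.
Qed.

Lemma level_sign_change : exists m r z0, [/\ 0 < r,
  {in `[m - r, m + r], forall phi, -1 < level_sin phi < 1} &
  (defect (level_pt (m - r)) z0 - w0) * (defect (level_pt (m + r)) z0 - w0) < 0].
Proof.
have [e e0 He] := level_sin_near.
have [e1 [e10 e1e e11]] : exists e1, [/\ 0 < e1, e1 <= e / 2 & e1 < 1].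
  have m0 : 0 < Num.min e 1 by rewrite lt_min e0 ltr01.
  have m1 : Num.min e 1 <= 1 by rewrite ge_min lexx orbT.
  have me : Num.min e 1 <= e by rewrite ge_min lexx.
  by exists (Num.min e 1 / 2); split; lra.
have e1I : 0 < e1 < 1 by rewrite e10.
have [m [ym /eqP sm /eqP cm]] :=
  exists_near_avoid2 y.1.2 e1I (@sin_pi_sep R) (@cos_pi_sep R v.1.2).
have sm2 : 0 < sin (pi * m) ^+ 2 by rewrite exprn_even_gt0 ?sm ?orbT.
have [r /andP[r0 re1] rm] := exists_small_sin_pi sm2 e10.
set d := 1 / 2 - m - 2 * v.1.2; exists m, r, ((v.1.1, v.1.2 + d), v.2).
have inI : {in `[m - r, m + r], forall phi, -1 < level_sin phi < 1}.
  move=> phi; rewrite in_itv /= => /andP[p1 p2]; apply: He.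
  rewrite (_ : phi - y.1.2 = (phi - m) + (m - y.1.2)); last by ring.
  apply: le_lt_trans (ler_normD _ _) _.
  have : `|phi - m| <= r by rewrite ler_norml; apply/andP; split; lra.
  lra.
have shift phi : phi \in `[m - r, m + r] ->
    defect (level_pt phi) ((v.1.1, v.1.2 + d), v.2) - w0 = defect1_shift phi v.1.2 d.
  move=> /inI /andP[/ltW U1 /ltW U2].
  by rewrite -[in X in _ - X](defect_level_pt (phi := phi)) ?U1 ?U2 // defect_shift_snd.
split => //; rewrite !shift ?in_itv /= ?lexx /=; try lra.
by apply: defect1_shift_sign => //; rewrite r0 /=; lra.
Qed.

Lemma reach2_box : exists (z0 : pt R) (d : R), 0 < d /\ box z0 d `<=` reach2 w0 v.
Proof.
have [m [r [z0 [r0 inI sign]]]] := level_sign_change.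
pose F phi z := defect (level_pt phi) z - w0.
have [d d0 Hd] : exists2 d, 0 < d & box z0 d `<=` [set z | F (m - r) z * F (m + r) z < 0].
  apply: nbhs_box.
  have C : {for z0, continuous (fun z => F (m - r) z * F (m + r) z)}.
    by apply: continuousM; apply: continuousB;
      (exact: continuous_defect || exact: cst_continuous).
  exact: (@cvgr_lt _ _ _ (nbhs_filter _) _ _ C 0 sign).
exists z0, d; split => // z /Hd /= /mulr_lt0_min_max sgn.
have Fc : {within `[m - r, m + r], continuous (F ^~ z)}.
  apply: continuous_in_subspaceT => phi; rewrite inE => /inI Uphi.
  exact: continuous_defect_level_pt.
have mr : m - r <= m + r by lra.
have [c /inI /andP[U1 U2] Fc0] := IVT mr Fc sgn.
exists (level_pt c); split; first by apply: defect_level_pt; rewrite !ltW.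
by apply/eqP; rewrite -subr_eq0; apply/eqP.
Qed.

End LevelSet.

Section RegularBox.
Variable R : realType.

Lemma reach2_box_involution (w0 : R) (s : pt R -> pt R) (v : pt R) :
  involutive s -> (forall a b, defect (s a) (s b) = defect a b) ->
  (forall z0 d z, box (s z0) d z -> box z0 d (s z)) ->
  (exists (z0 : pt R) (d : R), 0 < d /\ box z0 d `<=` reach2 w0 (s v)) ->
  exists (z0 : pt R) (d : R), 0 < d /\ box z0 d `<=` reach2 w0 v.
Proof.
move=> sK sD sB [z0 [d [d0 Hd]]]; exists (s z0), d; split => // z /sB /Hd[y [vy yz]].
by exists (s y); split; [rewrite -sD sK | rewrite -sD sK].
Qed.

Lemma reach2_box_regular (w0 : R) (v y : pt R) : 2 < w0 -> defect v y = w0 ->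
  defect_regular v y -> exists (z0 : pt R) (d : R), 0 < d /\ box z0 d `<=` reach2 w0 v.
Proof.
move=> w2 vy; have [g1 g2 g3] := defect1_gt0 w2 vy.
have sin_neq0 (a b : R) : 0 < defect1 a b -> sin (pi * a) != 0.
  by rewrite defect1_sin; apply: contraTneq => ->; rewrite mulr0 mul0r ltxx.
case/or3P => [c1|c2|c3]; last exact: reach2_box vy (sin_neq0 _ _ g3) c3.
- apply: (reach2_box_involution (@swap13K R) (@defect_swap13 R)).
    by move=> z0 d z [? ? ?].
  apply: (@reach2_box _ _ _ (swap13 y)); first by rewrite defect_swap13.
    exact: sin_neq0 g1.
  exact: c1.
- apply: (reach2_box_involution (@swap23K R) (@defect_swap23 R)).
    by move=> z0 d z [? ? ?].
  apply: (@reach2_box _ _ _ (swap23 y)); first by rewrite defect_swap23.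
    exact: sin_neq0 g2.
  exact: c2.
Qed.

End RegularBox.

Section Measure.
Variable R : realType.
Local Open Scope ereal_scope.

Lemma leb3_le (A B : set (pt R)) : A `<=` B -> leb3 A <= leb3 B.
Proof.
have leb3E C : leb3 C = \int[(@lebesgue_measure R \x @lebesgue_measure R)%E]_x
    lebesgue_measure (xsection C x) by [].
move=> AB; rewrite !leb3E !ge0_integralE //=.
apply: ereal_sup_le => _ [h /= hle <-]; exists h => //= x.
apply: (le_trans (hle x)); rewrite /patch /=; case: ifP => // _.
by apply: le_outer_measure => y; rewrite /xsection /= !inE; exact: AB.
Qed.

Lemma leb3_cube_gt0 (a b c e : R) : (0 < e)%R ->
  0 < leb3 ([set` `[a, a + e[%R] `*` [set` `[b, b + e[%R] `*` [set` `[c, c + e[%R]).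
Proof.
move=> e0; have itv_e t : lebesgue_measure (`[t, (t + e)%R[%classic : set R) = e%:E.
  by rewrite lebesgue_measure_itv /= lte_fin ltrDl e0 -EFinD addrAC subrr add0r.
rewrite /leb3 (@product_measure1E _ _ _ _ R (@lebesgue_measure R \x @lebesgue_measure R)%E
  (@lebesgue_measure R)); last 2 first.
- exact: measurableX.
- done.
rewrite [X in X * _](@product_measure1E _ _ _ _ R (@lebesgue_measure R)
  (@lebesgue_measure R)) //.
set M1 := (X in X * _ * _); set M2 := (X in _ * X * _); set M3 := (X in _ * X).
have -> : M1 = e%:E by exact: itv_e.
have -> : M2 = e%:E by exact: itv_e.
have -> : M3 = e%:E by exact: itv_e.
by rewrite -!EFinM lte_fin !mulr_gt0.
Qed.

Lemma leb3_periodic_gt0 (A : set (pt R)) (z0 : pt R) (d : R) : (0 < d)%R ->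
  box z0 d `<=` A ->
  (forall (z : pt R) (n1 n2 n3 : int),
     A ((z.1.1 + n1%:~R, z.1.2 + n2%:~R), z.2 + n3%:~R)%R -> A z) ->
  0 < leb3 (A `&` @cube R).
Proof.
move=> d0 boxA perA.
have frac (t : R) : (0 <= t - (Num.floor t)%:~R < 1)%R.
  have := real_floor_le (num_real t); have := real_floorD1_gt (num_real t).
  by rewrite intrD => *; apply/andP; split; lra.
pose a1 := (z0.1.1 - (Num.floor z0.1.1)%:~R)%R.
pose a2 := (z0.1.2 - (Num.floor z0.1.2)%:~R)%R.
pose a3 := (z0.2 - (Num.floor z0.2)%:~R)%R.
have /andP[a10 a11] : (0 <= a1 < 1)%R by exact: frac.
have /andP[a20 a21] : (0 <= a2 < 1)%R by exact: frac.
have /andP[a30 a31] : (0 <= a3 < 1)%R by exact: frac.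
pose e := Num.min d (Num.min (1 - a1) (Num.min (1 - a2) (1 - a3)))%R.
have e0 : (0 < e)%R by rewrite !lt_min d0 !subr_gt0 a11 a21 a31.
have [ed ea1 ea2 ea3] : [/\ e <= d, e <= 1 - a1, e <= 1 - a2 & e <= 1 - a3]%R.
  by rewrite /e !ge_min !lexx !orbT.
apply: (lt_le_trans (leb3_cube_gt0 a1 a2 a3 e0)); apply: leb3_le.
move=> z [[]]; rewrite /= !in_itv /= => /andP[z1 z1'] /andP[z2 z2'] /andP[z3 z3'].
split; last by split; [|split]; apply/andP; split; lra.
apply: (perA z (Num.floor z0.1.1) (Num.floor z0.1.2) (Num.floor z0.2)); apply: boxA.
rewrite /box /= (_ : z.1.1 + _ - z0.1.1 = z.1.1 - a1)%R; last by rewrite /a1; ring.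
rewrite (_ : z.1.2 + _ - z0.1.2 = z.1.2 - a2)%R; last by rewrite /a2; ring.
rewrite (_ : z.2 + _ - z0.2 = z.2 - a3)%R; last by rewrite /a3; ring.
by rewrite !ger0_norm ?subr_ge0 //; split; lra.
Qed.

End Measure.

Unset Implicit Arguments.

Theorem mainTheorem6 (R : realType) (w0 : R) (h2 : 2 < w0) (h3 : w0 < 3)
  (x : pt R) (hx : ~ no_collision w0 x) :
  (0 < @leb3 R (Sall w0 x `&` @cube R))%E.
Proof.
have [y xy] : exists y, Defs.connected1 w0 x y.
  by apply: contrapT => nxy; apply: hx => y xy; apply: nxy; exists y.
have [a [b [ab ha hb]]] := connected1_defect xy.
have [v [y' [hv vy reg]]] : exists v y',
    [/\ v = x \/ S1 w0 x v, defect v y' = w0 & defect_regular v y'].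
  have w23 : 2 < w0 < 3 by rewrite h2.
  have /orP[reg|reg] := defect_regular_pair w23 ab; first by exists a, b.
  by exists b, a; rewrite defectC.
have [z0 [d [d0 box_reach]]] := reach2_box_regular h2 vy reg.
have periodic z (n1 n2 n3 : int) :
    reach2 w0 v ((z.1.1 + n1%:~R, z.1.2 + n2%:~R), z.2 + n3%:~R) -> reach2 w0 v z.
  by move=> [u [vu uz]]; exists u; rewrite -(defect_intD u z n1 n2 n3).
apply: (lt_le_trans (leb3_periodic_gt0 d0 box_reach periodic)).
by apply: leb3_le => z [/(Sall_reach2 hv) xz cz].
Qed.
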